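(* Let $\mathbf k=(k_1,\ldots,k_r)\in\mathbb N^r$, $\mathbf m=(m_1,\ldots,m_p)\in\mathbb N^p$, $\boldsymbol\eta=(\eta_1,\ldots,\eta_r)\in\{\pm1\}^r$, $\boldsymbol\varepsilon=(\varepsilon_1,\ldots,\varepsilon_p)\in\{\pm1\}^p$, $|x|<1$, and put $\underline\eta=\eta_1\cdots\eta_r$, $n_0:=n$. Then \[ \mathrm{Mi}_{m_p,\ldots,m_1,k_1+1,k_2,\ldots,k_r}\big(\underline\eta\,\mathbf q(\boldsymbol\varepsilon),\mathbf p(\boldsymbol\eta);x\big) =(-1)^p\sum_{n=1}^\infty\frac{M_{n-1}\big(k_2,\ldots,k_r;\mathbf p(\eta_2,\ldots,\eta_r)\big)}{n^{k_1+1}}\big(1+\underline\eta(-1)^n\big)\sum_{n\ge n_1\ge\cdots\ge n_p\ge1}x^{n_p}\prod_{j=1}^p\frac{1+\varepsilon_j(-1)^{n_{j-1}+n_j}}{n_j^{m_j}} \] \[ -\sum_{j=1}^p(-1)^j\,\mathrm{Mi}_{m_p,\ldots,m_j}\big(-\mathbf q(\varepsilon_{j+1},\ldots,\varepsilon_p),-1;x\big)\,M\Big(\big(\mathbf k;\mathbf p(\boldsymbol\eta)\big)\circledast\big(1,m_1,\ldots,m_{j-1};-\mathbf p(\varepsilon_1,\ldots,\varepsilon_j)\big)^\star\Big) \] \[ -\sum_{j=1}^p(-1)^j\,\mathrm{Mi}_{m_p,\ldots,m_j}\big(\mathbf q(\varepsilon_{j+1},\ldots,\varepsilon_p),1;x\big)\,M\Big(\big(\mathbf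 k;\mathbf p(\boldsymbol\eta)\big)\circledast\big(1,m_1,\ldots,m_{j-1};\mathbf p(\varepsilon_1,\ldots,\varepsilon_j)\big)^\star\Big), \] where for $j=p$ the sign vector of $\mathrm{Mi}$ is just $(-1)$ resp. $(1)$. (The sign vector on the left is the concatenation of $\underline\eta\,\mathbf q(\boldsymbol\varepsilon)$, of length $p$, and $\mathbf p(\boldsymbol\eta)$, of length $r$.)
   Context: For $\boldsymbol\varepsilon=(\varepsilon_1,\ldots,\varepsilon_r)\in\{\pm1\}^r$: $\mathbf p(\boldsymbol\varepsilon)=(\varepsilon_1\cdots\varepsilon_r,\varepsilon_2\cdots\varepsilon_r,\ldots,\varepsilon_r)$, $\mathbf q(\boldsymbol\varepsilon)=(\varepsilon_1\cdots\varepsilon_r,\varepsilon_1\cdots\varepsilon_{r-1},\ldots,\varepsilon_1)$, empty for empty input; $a\boldsymbol\varepsilon=(a\varepsilon_1,\ldots,a\varepsilon_r)$. $M_n(\mathbf k;\boldsymbol\varepsilon)=\sum_{n\ge n_1>\cdots>n_r>0}\prod_j(1+\varepsilon_j(-1)^{n_j})/n_j^{k_j}$ and $M^\star_n(\mathbf k;\boldsymbol\varepsilon)=\sum_{n\ge n_1\ge\cdots\ge n_r\ge1}\prod_j(1+\varepsilon_j(-1)^{n_j})/n_j^{k_j}$, both $=1$ for empty index, $M_0$ of a nonempty index $=0$. $\mathrm{Mi}_{\mathbf k}(\boldsymbol\varepsilon;x)=\sum_{n_1>\cdots>n_r>0}x^{n_1}\prod_j(1+\varepsilon_j(-1)^{n_j})/n_j^{k_j}$.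 Convoluted multiple mixed value: for $\mathbf k\in\mathbb N^r$, $\mathbf l\in\mathbb N^s$, $\boldsymbol\eta\in\{\pm1,0\}\times\{\pm1\}^{r-1}$, $\boldsymbol\varepsilon\in\{\pm1,0\}\times\{\pm1\}^{s-1}$, $(\eta_1,\varepsilon_1)\ne(0,0)$: $M((\mathbf k;\boldsymbol\eta)\circledast(\mathbf l;\boldsymbol\varepsilon)^\star)=\sum_{n\ge1}\frac{M_{n-1}(k_2,\ldots,k_r;\eta_2,\ldots,\eta_r)M^\star_n(l_2,\ldots,l_s;\varepsilon_2,\ldots,\varepsilon_s)}{n^{k_1+l_1}}\cdot\frac{(1+\varepsilon_1(-1)^n)(1+\eta_1(-1)^n)}{2}$. *)

From Stdlib Require Import Reals List.
From Coquelicot Require Import Coquelicot.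
Import ListNotations.
Open Scope R_scope.

Fixpoint sumR (f : nat -> R) (n : nat) : R :=
  match n with
  | O => 0
  | S n' => sumR f n' + f (S n')
  end.

Definition prodR (l : list R) : R := fold_right Rmult 1 l.

(* p(eps) = (eps1...epsr, eps2...epsr, ..., epsr) *)
Fixpoint pvec (l : list R) : list R :=
  match l with
  | [] => []
  | e :: es => (e * prodR es) :: pvec es
  end.

(* q(eps) = (eps1...epsr, eps1...eps_{r-1}, ..., eps1) *)
Definition qvec (l : list R) : list R :=
  rev (map (fun i => prodR (firstn i l)) (seq 1 (length l))).

Definition scale (a : R) (l : list R) : list R := map (Rmult a) l.

(* M_n(k;eps) = sum_{n >= n1 > ... > nr > 0} prod (1+eps_j(-1)^{n_j})/n_j^{k_j} *)
Fixpoint Mn (n : nat) (ks : list nat) (es : list R) : R :=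
  match ks, es with
  | k :: ks', e :: es' =>
      sumR (fun n1 => (1 + e * (-1) ^ n1) / (INR n1) ^ k * Mn (n1 - 1) ks' es') n
  | _, _ => 1
  end.

(* M*_n(k;eps) = sum_{n >= n1 >= ... >= nr >= 1} prod (1+eps_j(-1)^{n_j})/n_j^{k_j} *)
Fixpoint Mstar (n : nat) (ks : list nat) (es : list R) : R :=
  match ks, es with
  | k :: ks', e :: es' =>
      sumR (fun n1 => (1 + e * (-1) ^ n1) / (INR n1) ^ k * Mstar n1 ks' es') n
  | _, _ => 1
  end.

(* Mi_k(eps;x) = sum_{n1 > ... > nr > 0} x^{n1} prod (1+eps_j(-1)^{n_j})/n_j^{k_j},
   as the series over n1 >= 1 of x^{n1} (1+eps1(-1)^{n1})/n1^{k1} M_{n1-1}(k2..;eps2..). *)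
Definition Mi (ks : list nat) (es : list R) (x : R) : R :=
  match ks, es with
  | k :: ks', e :: es' =>
      Series (fun i => let n1 := S i in
        x ^ n1 * (1 + e * (-1) ^ n1) / (INR n1) ^ k * Mn (n1 - 1) ks' es')
  | _, _ => 1
  end.

Definition conv (ks : list nat) (hs : list R) (ls : list nat) (es : list R) : R :=
  match ks, hs, ls, es with
  | k1 :: ks', h1 :: hs', l1 :: ls', e1 :: es' =>
      Series (fun i => let n := S i in
        Mn (n - 1) ks' hs' * Mstar n ls' es' / (INR n) ^ (k1 + l1)
        * ((1 + e1 * (-1) ^ n) * (1 + h1 * (-1) ^ n) / 2))
  | _, _, _, _ => 0
  end.

(* Tail nprev [m_1..m_p] [eps_1..eps_p] x
   = sum_{nprev >= n1 >= ... >= np >= 1} x^{np} prod_j (1+eps_j(-1)^{n_{j-1}+n_j})/n_j^{m_j},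
   with n_0 = nprev. *)
Fixpoint Tail (nprev : nat) (ms : list nat) (es : list R) (x : R) : R :=
  match ms, es with
  | m :: ms', e :: es' =>
      sumR (fun n1 => (1 + e * (-1) ^ (nprev + n1)) / (INR n1) ^ m * Tail n1 ms' es' x) nprev
  | _, _ => x ^ nprev
  end.

Definition is_sign (e : R) : Prop := e = 1 \/ e = -1.

(* Truncating every series at n_1 <= L turns the theorem into an
   identity of finite nested sums ([truncated_identity]).  There the left-hand
   side is read from the position n of the depth-(k_1 + 1) entry: the entries of
   depths m_1, ..., m_p sit on an ascending chain n < l_1 < ... < l_p <= L
   ([Mi_trunc_lead]).  Such an upper tail expands, by cutting the chain at each
   position j, into an alternating sum of products of a star sum below the cut
   and a complete ascending sum above it ([asc_sum_expand]).  Splitting each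
   cut term by the parity of n identifies it with the j-th products
   Mi(...) conv(...) of the statement ([cut_term]), and the uncut remainder
   with the series of tail sums ([all_star_term]).  Finally every truncation
   converges: the Mi-values geometrically since |x| < 1, the convoluted values
   because the finite multiple sums only grow like powers of harmonic numbers
   ([Mn_bound], [harm_series_bounded]); so the identity passes to the limit
   ([identity_limit]). *)

From Stdlib Require Import Reals List Lia Lra FunctionalExtensionality.
From Coquelicot Require Import Coquelicot.
Import ListNotations.
Open Scope R_scope.

Lemma sumR_ext_le (f g : nat -> R) n :
  (forall i, (1 <= i <= n)%nat -> f i = g i) -> sumR f n = sumR g n.
Proof.
  induction n as [|n IH]; simpl; intros H; auto.
  rewrite IH by (intros; apply H; lia). rewrite (H (S n)) by lia. reflexivity.
Qed.

Lemma sumR_ext (f g : nat -> R) n : (forall i, f i = g i) -> sumR f n = sumR g n.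
Proof. intros; apply sumR_ext_le; auto. Qed.

Lemma sumR_plus (f g : nat -> R) n : sumR (fun i => f i + g i) n = sumR f n + sumR g n.
Proof. induction n; simpl; [lra | rewrite IHn; lra]. Qed.

Lemma sumR_scal_l (c : R) (f : nat -> R) n : sumR (fun i => c * f i) n = c * sumR f n.
Proof. induction n; simpl; [lra | rewrite IHn; lra]. Qed.

Lemma sumR_scal_r (c : R) (f : nat -> R) n : sumR (fun i => f i * c) n = sumR f n * c.
Proof. induction n; simpl; [lra | rewrite IHn; lra]. Qed.

Lemma sumR_zero n : sumR (fun _ => 0) n = 0.
Proof. induction n; simpl; [lra | rewrite IHn; lra]. Qed.

Lemma sumR_vanish (f : nat -> R) n : (forall i, f i = 0) -> sumR f n = 0.
Proof. intros H. rewrite <- (sumR_zero n). apply sumR_ext; auto. Qed.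

Lemma sumR_opp_plus (f g : nat -> R) n : sumR (fun j => - (f j + g j)) n = - sumR f n - sumR g n.
Proof. induction n; simpl; [ring | rewrite IHn; ring]. Qed.

Lemma sumR_shift (f : nat -> R) n : sumR f (S n) = f 1%nat + sumR (fun i => f (S i)) n.
Proof. induction n; simpl in *; [lra|]. rewrite IHn. lra. Qed.

Lemma sumR_swap (f : nat -> nat -> R) n q :
  sumR (fun i => sumR (fun j => f i j) q) n = sumR (fun j => sumR (fun i => f i j) n) q.
Proof.
  induction n; simpl.
  - rewrite sumR_zero; auto.
  - rewrite IHn, <- sumR_plus. auto.
Qed.

(* Finite Fubini on the triangle [1 <= n < l <= L]. *)
Lemma sumR_triangle (a c : nat -> R) L :
  sumR (fun l => c l * sumR a (l - 1)) L = sumR (fun n => a n * (sumR c L - sumR c n)) L.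
Proof.
  induction L; simpl; auto.
  rewrite IHL, Nat.sub_0_r.
  rewrite (sumR_ext (fun n => a n * (sumR c L + c (S L) - sumR c n))
                    (fun n => a n * (sumR c L - sumR c n) + a n * c (S L))) by (intros; ring).
  rewrite sumR_plus, sumR_scal_r. ring.
Qed.

Lemma sumR_abs f n : Rabs (sumR f n) <= sumR (fun i => Rabs (f i)) n.
Proof.
  induction n; simpl. { rewrite Rabs_R0; lra. }
  eapply Rle_trans; [apply Rabs_triang | lra].
Qed.

Lemma sumR_le f g n : (forall i, (1 <= i <= n)%nat -> f i <= g i) -> sumR f n <= sumR g n.
Proof.
  induction n; simpl; intros H; [lra|].
  apply Rplus_le_compat; [apply IHn; intros; apply H | apply H]; lia.
Qed.

Lemma sum_n_sumR (f : nat -> R) N : sum_n (fun i => f (S i)) N = sumR f (S N).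
Proof.
  induction N.
  - rewrite sum_O. simpl. ring.
  - rewrite sum_Sn, IHN. reflexivity.
Qed.

Lemma Forall_firstn {A} (P : A -> Prop) k l : List.Forall P l -> List.Forall P (firstn k l).
Proof. revert k; induction l; intros [|k] H; simpl; auto. inversion H; subst; constructor; auto. Qed.

Lemma Forall_skipn {A} (P : A -> Prop) k l : List.Forall P l -> List.Forall P (skipn k l).
Proof. revert k; induction l; intros [|k] H; simpl; auto. inversion H; subst; auto. Qed.

Lemma skipn_cons_nth {A} k (l : list A) d : (k < length l)%nat ->
  skipn k l = nth k l d :: skipn (S k) l.
Proof. revert k; induction l; intros [|k]; simpl; intros H; try lia; auto. apply IHl; lia. Qed.

Lemma is_sign_mult a b : is_sign a -> is_sign b -> is_sign (a * b).
Proof. unfold is_sign; intros [->| ->] [->| ->]; lra. Qed.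

Lemma is_sign_sq a : is_sign a -> a * a = 1.
Proof. unfold is_sign; intros [->| ->]; lra. Qed.

Lemma is_sign_cases a b : is_sign a -> is_sign b -> a = b \/ a = - b.
Proof. unfold is_sign; intros [->| ->] [->| ->]; lra. Qed.

Lemma is_sign_m1_pow n : is_sign ((-1) ^ n).
Proof.
  induction n as [|n [E|E]]; simpl; unfold is_sign; [left | right | left]; rewrite ?E; lra.
Qed.

Lemma is_sign_prodR l : List.Forall is_sign l -> is_sign (prodR l).
Proof. induction 1; simpl; [left; auto | apply is_sign_mult; auto]. Qed.

Definition weight (k : nat) (e : R) (i : nat) : R := (1 + e * (-1) ^ i) / INR i ^ k.

Lemma Mn_cons L k ks e es :
  Mn L (k :: ks) (e :: es) = sumR (fun l => weight k e l * Mn (l - 1) ks es) L.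
Proof. destruct L; reflexivity. Qed.
Lemma Mstar_cons L k ks e es :
  Mstar L (k :: ks) (e :: es) = sumR (fun l => weight k e l * Mstar l ks es) L.
Proof. destruct L; reflexivity. Qed.
Lemma Tail_cons L k ks e es x :
  Tail L (k :: ks) (e :: es) x = sumR (fun l => (1 + e * (-1) ^ (L + l)) / INR l ^ k * Tail l ks es x) L.
Proof. destruct L; reflexivity. Qed.
Lemma Mn_nil L ks es : ks = [] \/ es = [] -> Mn L ks es = 1.
Proof. intros [-> | ->]; [destruct L | destruct L, ks]; reflexivity. Qed.
Lemma Mstar_nil L ks es : ks = [] \/ es = [] -> Mstar L ks es = 1.
Proof. intros [-> | ->]; [destruct L | destruct L, ks]; reflexivity. Qed.
Lemma Tail_nil L es x : Tail L [] es x = x ^ L.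
Proof. destruct L; reflexivity. Qed.

(** * Nested sums over chains of indices *)

Fixpoint weights (ks : list nat) (es : list R) {struct ks} : list (nat -> R) :=
  match ks, es with
  | k :: ks', e :: es' => weight k e :: weights ks' es'
  | _, _ => []
  end.

(* [desc_sum L [f_1;..;f_r] b] = sum over [L >= n_1 > ... > n_r > n >= 1] of
   [f_1 n_1 ... f_r n_r b n]. *)
Fixpoint desc_sum (L : nat) (fs : list (nat -> R)) (b : nat -> R) {struct fs} : R :=
  match fs with
  | [] => sumR b L
  | f :: fs' => sumR (fun i => f i * desc_sum (i - 1) fs' b) L
  end.

Definition desc_sum_at (L : nat) (fs : list (nat -> R)) (phi b : nat -> R) : R :=
  match fs with
  | [] => sumR (fun n => phi n * b n) L
  | f :: fs' => sumR (fun i => phi i * f i * desc_sum (i - 1) fs' b) L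
  end.

(* [asc_sum L n [g_1;..;g_r] phi] = sum over [n < l_1 < ... < l_r <= L] of
   [g_1 l_1 ... g_r l_r phi l_r]  (and [phi n] when [r = 0]). *)
Fixpoint asc_sum (L n : nat) (gs : list (nat -> R)) (phi : nat -> R) {struct gs} : R :=
  match gs with
  | [] => phi n
  | g :: gs' => sumR (fun l => g l * asc_sum L l gs' phi) L - sumR (fun l => g l * asc_sum L l gs' phi) n
  end.

Fixpoint star_sum (n : nat) (gs : list (nat -> R)) (phi : nat -> R) {struct gs} : R :=
  match gs with
  | [] => phi n
  | g :: gs' => sumR (fun l => g l * star_sum l gs' phi) n
  end.

(* Truncation at [n_1 <= L] of the series [Mi], with [phi n_1] in place of [x ^ n_1]. *)
Definition Mi_trunc (L : nat) (ks : list nat) (es : list R) (phi : nat -> R) : R :=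
  match ks, es with
  | k :: ks', e :: es' => sumR (fun l => phi l * weight k e l * Mn (l - 1) ks' es') L
  | _, _ => 0
  end.

Lemma Mn_desc_sum ks1 es1 k e ks2 es2 L : length ks1 = length es1 ->
  Mn L (ks1 ++ k :: ks2) (es1 ++ e :: es2)
  = desc_sum L (weights ks1 es1) (fun n => weight k e n * Mn (n - 1) ks2 es2).
Proof.
  revert es1 L; induction ks1 as [|k' ks1 IH]; intros [|e' es1] L Hl;
    simpl in *; try lia; rewrite Mn_cons; apply sumR_ext; intros i.
  - reflexivity.
  - rewrite IH by lia. reflexivity.
Qed.

Lemma Mi_trunc_desc_sum ks1 es1 k e ks2 es2 L phi : length ks1 = length es1 ->
  Mi_trunc L (ks1 ++ k :: ks2) (es1 ++ e :: es2) phi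
  = desc_sum_at L (weights ks1 es1) phi (fun n => weight k e n * Mn (n - 1) ks2 es2).
Proof.
  destruct ks1 as [|k' ks1], es1 as [|e' es1]; cbn [Mi_trunc desc_sum_at weights app length];
    intros Hl; try lia.
  - apply sumR_ext; intros; ring.
  - apply sumR_ext; intros i. rewrite Mn_desc_sum by lia. reflexivity.
Qed.

Lemma desc_sum_snoc fs g b L : desc_sum L (fs ++ [g]) b = desc_sum L fs (fun l => g l * sumR b (l - 1)).
Proof.
  revert L; induction fs as [|f fs IH]; intros L; simpl; auto.
  apply sumR_ext; intros; rewrite IH; auto.
Qed.

Lemma desc_sum_at_snoc fs g phi b L :
  desc_sum_at L (fs ++ [g]) phi b = desc_sum_at L fs phi (fun l => g l * sumR b (l - 1)).
Proof.
  destruct fs as [|f fs]; simpl.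
  - apply sumR_ext; intros; ring.
  - apply sumR_ext; intros; rewrite desc_sum_snoc; auto.
Qed.

(* Reading a descending chain from its smallest index: descending sums over
   [rev gs] are ascending sums over [gs]. *)
Lemma desc_sum_at_rev gs L phi b :
  desc_sum_at L (rev gs) phi b = sumR (fun n => b n * asc_sum L n gs phi) L.
Proof.
  revert b; induction gs as [|g gs IH]; intros b; simpl.
  - apply sumR_ext; intros; ring.
  - rewrite desc_sum_at_snoc, IH.
    rewrite (sumR_ext _ (fun l => (g l * asc_sum L l gs phi) * sumR b (l - 1))) by (intros; ring).
    apply sumR_triangle.
Qed.

Lemma asc_sum_from_0 g gs L phi : asc_sum L 0 (g :: gs) phi = desc_sum_at L (rev gs) phi g.
Proof. rewrite desc_sum_at_rev. simpl. rewrite Rminus_0_r. apply sumR_ext; intros; ring. Qed.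

Lemma asc_sum_expand gs L phi n : (n <= L)%nat ->
  asc_sum L n gs phi
  = sumR (fun j => (-1) ^ (j - 1) * star_sum n (firstn (j - 1) gs) (fun _ => 1)
                   * asc_sum L 0 (skipn (j - 1) gs) phi) (length gs)
    + (-1) ^ (length gs) * star_sum n gs phi.
Proof.
  revert n; induction gs as [|g gs IH]; intros n Hn; [simpl; ring|].
  set (T := fun j => asc_sum L 0 (skipn (j - 1) gs) phi).
  set (Sj := fun j l => star_sum l (firstn (j - 1) gs) (fun _ => 1)).
  (* the chains with [l_1 <= n], expanded by the induction hypothesis *)
  assert (Hlow : sumR (fun l => g l * asc_sum L l gs phi) n
    = sumR (fun j => (-1) ^ (j - 1) * T j * sumR (fun l => g l * Sj j l) n) (length gs)
      + (-1) ^ length gs * star_sum n (g :: gs) phi).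
  { rewrite (sumR_ext_le _ (fun l => sumR (fun j => (-1) ^ (j - 1) * T j * (g l * Sj j l)) (length gs)
                              + (-1) ^ length gs * (g l * star_sum l gs phi)) n).
    - rewrite sumR_plus, sumR_swap, sumR_scal_l. f_equal.
      apply sumR_ext; intros j. apply sumR_scal_l.
    - intros l Hl. rewrite IH by lia. rewrite Rmult_plus_distr_l, <- sumR_scal_l.
      f_equal; [apply sumR_ext; intros; unfold T, Sj; ring | ring]. }
  cbn [asc_sum length]. rewrite Hlow, sumR_shift.
  cbn [firstn skipn Nat.sub star_sum pow sumR].
  rewrite (sumR_ext_le (fun i => (-1) ^ (S i - 1) * _ * _)
             (fun j => -1 * ((-1) ^ (j - 1) * T j * sumR (fun l => g l * Sj j l) n))).
  - rewrite sumR_scal_l. simpl. ring.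
  - intros j Hj. destruct j as [|j]; [lia|].
    rewrite Nat.sub_succ, Nat.sub_0_r. cbn [firstn skipn star_sum].
    unfold T, Sj. rewrite Nat.sub_succ, Nat.sub_0_r. simpl. ring.
Qed.

Fixpoint runprod (c : R) (es : list R) : list R :=
  match es with
  | [] => []
  | e :: es' => (c * e) :: runprod (c * e) es'
  end.

Lemma runprod_spec c l :
  runprod c l = map (fun i => c * prodR (firstn i l)) (seq 1 (length l)).
Proof.
  revert c; induction l as [|e l IH]; intros c; simpl; auto.
  f_equal; [ring|]. rewrite IH, <- (seq_shift _ 1), map_map.
  apply map_ext; intros i. simpl. ring.
Qed.

Lemma scale_qvec c l : scale c (qvec l) = rev (runprod c l).
Proof. rewrite runprod_spec. unfold scale, qvec. rewrite map_rev, map_map. reflexivity. Qed.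

Lemma scale_1 l : scale 1 l = l.
Proof. unfold scale. rewrite <- (map_id l) at 2. apply map_ext; intros; ring. Qed.

Lemma length_runprod c l : length (runprod c l) = length l.
Proof. revert c; induction l; simpl; auto. Qed.

Lemma firstn_runprod k c l : firstn k (runprod c l) = runprod c (firstn k l).
Proof. revert k c; induction l; intros [|k] c; simpl; auto. rewrite IHl; auto. Qed.

Lemma skipn_runprod k c l : skipn k (runprod c l) = runprod (c * prodR (firstn k l)) (skipn k l).
Proof.
  revert k c; induction l as [|e l IH]; intros [|k] c; simpl; try reflexivity.
  - rewrite Rmult_1_r. reflexivity.
  - rewrite IH, Rmult_assoc. reflexivity.
Qed.

Lemma skipn_runprod_cons k c l : (k < length l)%nat ->
  skipn k (runprod c l) = (c * prodR (firstn (S k) l)) :: skipn (S k) (runprod c l).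
Proof.
  revert k c; induction l as [|e l IH]; intros [|k] c; simpl; intros H; try lia.
  - f_equal. ring.
  - rewrite IH by lia. f_equal. simpl. ring.
Qed.

(* Started at [s] times the total product [e e_1 ... e_r] and with its last
   entry dropped, the running product of [e, e_1, ..., e_r] is [s] times the
   p-vector [(e_1...e_r, e_2...e_r, ..., e_r)], since squares of signs are 1. *)
Lemma runprod_removelast s e es : List.Forall is_sign (e :: es) ->
  runprod (s * prodR (e :: es)) (removelast (e :: es)) = scale s (pvec es).
Proof.
  revert e; induction es as [|e' es IH]; intros e H; simpl; auto.
  inversion H as [|? ? He H']; subst.
  assert (Hc : s * (e * (e' * prodR es)) * e = s * (e' * prodR es))
    by (transitivity (s * (e * e) * (e' * prodR es)); [ring | rewrite is_sign_sq by auto; ring]).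
  rewrite Hc. f_equal. rewrite <- (IH e') by auto. reflexivity.
Qed.

Lemma is_sign_scale c l : is_sign c -> List.Forall is_sign l -> List.Forall is_sign (scale c l).
Proof.
  intros Hc H. apply Forall_map. eapply Forall_impl; [|exact H]. intros; apply is_sign_mult; auto.
Qed.

Lemma is_sign_pvec l : List.Forall is_sign l -> List.Forall is_sign (pvec l).
Proof. induction 1; simpl; constructor; auto. apply is_sign_mult; auto. apply is_sign_prodR; auto. Qed.

Lemma is_sign_runprod c l : is_sign c -> List.Forall is_sign l -> List.Forall is_sign (runprod c l).
Proof. intros Hc H; revert c Hc; induction H; intros c Hc; simpl; constructor; auto using is_sign_mult. Qed.

Lemma is_sign_qvec l : List.Forall is_sign l -> List.Forall is_sign (qvec l).
Proof.
  intros H. rewrite <- (scale_1 (qvec l)), scale_qvec. apply Forall_rev, is_sign_runprod; auto. left; auto.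
Qed.

Lemma length_weights ks es : length (weights ks es) = Nat.min (length ks) (length es).
Proof. revert es; induction ks; intros [|e es]; simpl; auto. Qed.

Lemma weights_app ks1 es1 ks2 es2 : length ks1 = length es1 ->
  weights (ks1 ++ ks2) (es1 ++ es2) = weights ks1 es1 ++ weights ks2 es2.
Proof.
  revert es1; induction ks1; intros [|e es1]; simpl; intros H; try lia; auto.
  rewrite IHks1; auto.
Qed.

Lemma weights_rev ks es : length ks = length es -> rev (weights ks es) = weights (rev ks) (rev es).
Proof.
  revert es; induction ks; intros [|e es]; simpl; intros H; try lia; auto.
  rewrite weights_app by (rewrite !length_rev; lia). rewrite IHks by lia. auto.
Qed.

Lemma firstn_weights k ks es : firstn k (weights ks es) = weights (firstn k ks) (firstn k es).
Proof. revert k es; induction ks; intros [|k] [|e es]; simpl; auto. rewrite IHks; auto. Qed.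

Lemma skipn_weights k ks es : skipn k (weights ks es) = weights (skipn k ks) (skipn k es).
Proof.
  revert k es; induction ks; intros [|k] [|e es]; simpl; auto.
  destruct (skipn k ks); auto.
Qed.

Lemma Mstar_star_sum n ks es : Mstar n ks es = star_sum n (weights ks es) (fun _ => 1).
Proof.
  revert n es; induction ks as [|k ks IH]; intros n [|e es];
    try (apply Mstar_nil; auto).
  rewrite Mstar_cons. apply sumR_ext; intros; rewrite IH; reflexivity.
Qed.

(* The parity-coupled tail sum: the factor [1 + e_j (-1)^(n_{j-1} + n_j)] only
   depends on the parity sign [c = (-1)^(n_{j-1})], so it is a star sum with the
   running products of [c] and the [e_j] as signs. *)
Lemma Tail_star_sum m eps x c n : List.Forall is_sign eps -> is_sign c -> (-1) ^ n = c ->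
  Tail n m eps x = star_sum n (weights m (runprod c eps)) (fun l => x ^ l).
Proof.
  revert eps c n; induction m as [|k m IH]; intros [|e eps] c n He Hc Hn;
    simpl runprod; simpl weights; cbn [star_sum].
  - apply Tail_nil.
  - apply Tail_nil.
  - destruct n; reflexivity.
  - apply Forall_cons_iff in He as [He1 He2]. rewrite Tail_cons. apply sumR_ext; intros i. unfold weight.
    rewrite pow_add, Hn.
    assert (Hce : is_sign (c * e)) by (apply is_sign_mult; auto).
    destruct (is_sign_cases ((-1) ^ i) (c * e) (is_sign_m1_pow i) Hce) as [E|E].
    + rewrite (IH eps (c * e) i) by auto. f_equal. f_equal. ring.
    + rewrite E. replace (1 + e * (c * - (c * e))) with (1 - (c * c) * (e * e)) by ring.
      replace (1 + c * e * - (c * e)) with (1 - (c * c) * (e * e)) by ring.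
      rewrite !is_sign_sq by auto. unfold Rdiv. ring.
Qed.

Definition conv_trunc (ks : list nat) (hs : list R) (ls : list nat) (es : list R) (L : nat) : R :=
  match ks, hs, ls, es with
  | k1 :: ks', h1 :: hs', l1 :: ls', e1 :: es' =>
      sumR (fun n => Mn (n - 1) ks' hs' * Mstar n ls' es' / (INR n) ^ (k1 + l1)
        * ((1 + e1 * (-1) ^ n) * (1 + h1 * (-1) ^ n) / 2)) L
  | _, _, _, _ => 0
  end.

(** * The truncated identity *)

Section TruncatedIdentity.

Variables (k1 : nat) (ks : list nat) (h1 : R) (hs : list R) (m : list nat) (eps : list R).
Hypotheses (Hlen : length eps = length m) (Hh1 : is_sign h1)
  (Hhs : List.Forall is_sign hs) (Heps : List.Forall is_sign eps).

Local Notation etabar := (prodR (h1 :: hs)).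
(* The factor carried by the index [n] of the depth-[k_1 + 1] entry. *)
Local Notation lead n := (weight (S k1) etabar n * Mn (n - 1) ks (pvec hs)).
(* The factors of the entries of depths [m_1, ..., m_p], read upwards from [n]. *)
Local Notation gs := (weights m (runprod etabar eps)).

Lemma etabar_sign : is_sign etabar.
Proof. apply is_sign_prodR. constructor; auto. Qed.

Lemma Mi_trunc_lead L phi :
  Mi_trunc L (rev m ++ S k1 :: ks) (scale etabar (qvec eps) ++ pvec (h1 :: hs)) phi
  = sumR (fun n => lead n * asc_sum L n gs phi) L.
Proof.
  change (pvec (h1 :: hs)) with (etabar :: pvec hs).
  rewrite scale_qvec, Mi_trunc_desc_sum by (rewrite !length_rev, length_runprod; lia).
  rewrite <- weights_rev by (rewrite length_runprod; lia).
  rewrite desc_sum_at_rev. apply sumR_ext; intros; ring.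
Qed.

Section Cut.

(* The chain is cut after its [j']-th entry; [c] is [e_1 ... e_{j'+1}]. *)
Variables (j' : nat) (s : R).
Hypotheses (Hj' : (j' < length m)%nat) (Hs : is_sign s).
Local Notation c := (prodR (firstn (S j') eps)).

Lemma firstn_eps_cons : exists e0 rest, firstn (S j') eps = e0 :: rest.
Proof. destruct eps as [|e0 rest]; [simpl in Hlen; lia | eexists; eexists; reflexivity]. Qed.

Lemma conv_trunc_unfold L :
  conv_trunc (k1 :: ks) (pvec (h1 :: hs)) (1%nat :: firstn j' m) (scale s (pvec (firstn (S j') eps))) L
  = sumR (fun n => Mn (n - 1) ks (pvec hs)
            * Mstar n (firstn j' m) (scale s (pvec (tl (firstn (S j') eps)))) / (INR n) ^ (k1 + 1)
            * ((1 + s * c * (-1) ^ n) * (1 + etabar * (-1) ^ n) / 2)) L.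
Proof.
  destruct firstn_eps_cons as (e0 & rest & ->).
  reflexivity.
Qed.

Lemma star_prefix : etabar = s * c ->
  firstn j' gs = weights (firstn j' m) (scale s (pvec (tl (firstn (S j') eps)))).
Proof.
  intros E. rewrite firstn_weights, firstn_runprod. f_equal.
  rewrite <- removelast_firstn by lia. rewrite E.
  assert (Hf : List.Forall is_sign (firstn (S j') eps)) by (apply Forall_firstn; auto).
  destruct firstn_eps_cons as (e0 & rest & Er). rewrite Er in *.
  apply runprod_removelast; auto.
Qed.

Lemma asc_suffix phi L : etabar * c = s ->
  asc_sum L 0 (skipn j' gs) phi
  = Mi_trunc L (rev (skipn j' m)) (scale s (qvec (skipn (S j') eps)) ++ [s]) phi.
Proof.
  intros E.
  rewrite skipn_weights, skipn_runprod_cons, skipn_runprod, E by lia.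
  rewrite (skipn_cons_nth j' m 0%nat Hj'). cbn [weights].
  rewrite asc_sum_from_0, weights_rev by (rewrite length_runprod, !length_skipn; lia).
  rewrite <- scale_qvec. cbn [rev].
  rewrite Mi_trunc_desc_sum by (rewrite scale_qvec, !length_rev, length_runprod, !length_skipn; lia).
  f_equal. extensionality n. rewrite Mn_nil by auto. ring.
Qed.

(* One sign half of the [j]-th cut term: a product of a truncated convoluted
   value and a truncated [Mi] value.  If [etabar] and [s c] disagree, the
   parity factors kill every summand on both sides. *)
Lemma cut_term_half phi L :
  sumR (fun n => lead n * ((1 + s * c * (-1) ^ n) / 2) * star_sum n (firstn j' gs) (fun _ => 1)) L
    * asc_sum L 0 (skipn j' gs) phi
  = Mi_trunc L (rev (skipn j' m)) (scale s (qvec (skipn (S j') eps)) ++ [s]) phi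
    * conv_trunc (k1 :: ks) (pvec (h1 :: hs)) (1%nat :: firstn j' m) (scale s (pvec (firstn (S j') eps))) L.
Proof.
  rewrite (Rmult_comm (Mi_trunc _ _ _ _)).
  assert (Hc : is_sign c) by (apply is_sign_prodR, Forall_firstn; auto).
  rewrite conv_trunc_unfold.
  destruct (is_sign_cases etabar (s * c) etabar_sign (is_sign_mult _ _ Hs Hc)) as [E|E].
  - assert (E' : etabar * c = s)
      by (rewrite E; transitivity (s * (c * c)); [ring | rewrite is_sign_sq by auto; ring]).
    rewrite (star_prefix E), (asc_suffix phi L E').
    f_equal. apply sumR_ext; intros n.
    rewrite Mstar_star_sum, Nat.add_1_r. unfold weight, Rdiv. ring.
  - assert (Hu : forall n, is_sign (s * c * (-1) ^ n))
      by (intros; apply is_sign_mult; [apply is_sign_mult | apply is_sign_m1_pow]; auto).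
    rewrite !(sumR_vanish _ L); [ring | ..]; intros n; unfold weight;
      rewrite E, <- Ropp_mult_distr_l; destruct (Hu n) as [U|U]; rewrite U; unfold Rdiv; ring.
Qed.

End Cut.

Lemma cut_term j phi L : (1 <= j <= length m)%nat ->
  sumR (fun n => lead n * star_sum n (firstn (j - 1) gs) (fun _ => 1)) L
    * asc_sum L 0 (skipn (j - 1) gs) phi
  = Mi_trunc L (rev (skipn (j - 1) m)) (scale (-1) (qvec (skipn j eps)) ++ [-1]) phi
      * conv_trunc (k1 :: ks) (pvec (h1 :: hs)) (1%nat :: firstn (j - 1) m)
          (scale (-1) (pvec (firstn j eps))) L
    + Mi_trunc L (rev (skipn (j - 1) m)) (qvec (skipn j eps) ++ [1]) phi
      * conv_trunc (k1 :: ks) (pvec (h1 :: hs)) (1%nat :: firstn (j - 1) m)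
          (pvec (firstn j eps)) L.
Proof.
  intros Hj. destruct j as [|j']; [lia|]. rewrite Nat.sub_succ, Nat.sub_0_r.
  assert (Hplus := cut_term_half j' 1 ltac:(lia) ltac:(left; auto) phi L).
  rewrite !scale_1 in Hplus.
  rewrite <- Hplus, <- cut_term_half by (unfold is_sign; auto; lia).
  rewrite <- Rmult_plus_distr_r, <- sumR_plus. f_equal.
  apply sumR_ext; intros n. field.
Qed.

Lemma all_star_term x n :
  lead n * star_sum n gs (fun l => x ^ l)
  = Mn (n - 1) ks (pvec hs) / (INR n) ^ (k1 + 1) * (1 + etabar * (-1) ^ n) * Tail n m eps x.
Proof.
  unfold weight. rewrite Nat.add_1_r.
  destruct (is_sign_cases ((-1) ^ n) etabar (is_sign_m1_pow n) etabar_sign) as [E|E].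
  - rewrite (Tail_star_sum m eps x etabar n) by auto using etabar_sign. unfold Rdiv. ring.
  - rewrite E. replace (1 + etabar * - etabar) with (1 - etabar * etabar) by ring.
    rewrite is_sign_sq by apply etabar_sign. unfold Rdiv. ring.
Qed.

Lemma truncated_identity x L :
  Mi_trunc L (rev m ++ (S k1) :: ks) (scale etabar (qvec eps) ++ pvec (h1 :: hs)) (fun l => x ^ l)
  = (-1) ^ (length m) * sumR (fun n => Mn (n - 1) ks (pvec hs) / (INR n) ^ (k1 + 1)
        * (1 + etabar * (-1) ^ n) * Tail n m eps x) L
    - sumR (fun j => (-1) ^ j
        * Mi_trunc L (rev (skipn (j - 1) m)) (scale (-1) (qvec (skipn j eps)) ++ [-1]) (fun l => x ^ l)
        * conv_trunc (k1 :: ks) (pvec (h1 :: hs)) (1%nat :: firstn (j - 1) m)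
               (scale (-1) (pvec (firstn j eps))) L) (length m)
    - sumR (fun j => (-1) ^ j
        * Mi_trunc L (rev (skipn (j - 1) m)) (qvec (skipn j eps) ++ [1]) (fun l => x ^ l)
        * conv_trunc (k1 :: ks) (pvec (h1 :: hs)) (1%nat :: firstn (j - 1) m)
               (pvec (firstn j eps)) L) (length m).
Proof.
  assert (Hgs : length gs = length m) by (rewrite length_weights, length_runprod; lia).
  rewrite Mi_trunc_lead.
  (* expand every upper tail and exchange the sums over [n] and [j] *)
  rewrite (sumR_ext_le _ (fun n =>
      sumR (fun j => (-1) ^ (j - 1) * (lead n * star_sum n (firstn (j - 1) gs) (fun _ => 1))
                     * asc_sum L 0 (skipn (j - 1) gs) (fun l => x ^ l)) (length gs)
      + (-1) ^ length gs * (lead n * star_sum n gs (fun l => x ^ l)))).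
  2:{ intros n Hn. rewrite asc_sum_expand by lia. rewrite Rmult_plus_distr_l, <- sumR_scal_l.
      f_equal; [apply sumR_ext; intros; ring | ring]. }
  rewrite sumR_plus, sumR_swap, sumR_scal_l, Hgs.
  rewrite (sumR_ext _ _ _ (all_star_term x)).
  rewrite (sumR_ext_le _ (fun j => - (
      (-1) ^ j * Mi_trunc L (rev (skipn (j - 1) m)) (scale (-1) (qvec (skipn j eps)) ++ [-1]) (fun l => x ^ l)
      * conv_trunc (k1 :: ks) (pvec (h1 :: hs)) (1%nat :: firstn (j - 1) m)
          (scale (-1) (pvec (firstn j eps))) L
      + (-1) ^ j * Mi_trunc L (rev (skipn (j - 1) m)) (qvec (skipn j eps) ++ [1]) (fun l => x ^ l)
      * conv_trunc (k1 :: ks) (pvec (h1 :: hs)) (1%nat :: firstn (j - 1) m)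
          (pvec (firstn j eps)) L))).
  2:{ intros j Hj. rewrite !Rmult_assoc, <- Rmult_plus_distr_l, <- cut_term by lia.
      rewrite <- sumR_scal_r, Ropp_mult_distr_l, <- sumR_scal_l.
      apply sumR_ext; intros n. destruct j as [|j]; [lia|].
      rewrite Nat.sub_succ, Nat.sub_0_r. simpl pow. ring. }
  rewrite sumR_opp_plus. ring.
Qed.

End TruncatedIdentity.

(** * Growth of the finite multiple sums *)

Definition harm (n : nat) : R := 1 + sumR (fun i => / INR i) n.

Lemma harm_S n : harm (S n) = harm n + / INR (S n).
Proof. unfold harm; simpl; ring. Qed.

Lemma harm_0 : harm 0 = 1.
Proof. unfold harm; simpl; ring. Qed.

Lemma harm_mono n k : (n <= k)%nat -> harm n <= harm k.
Proof.
  induction 1; [lra|]. rewrite harm_S.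
  assert (0 < / INR (S m)) by (apply Rinv_0_lt_compat, lt_0_INR; lia). lra.
Qed.

Lemma harm_ge1 n : 1 <= harm n.
Proof. rewrite <- harm_0. apply harm_mono; lia. Qed.

Lemma harm_le n : harm n <= INR n + 1.
Proof.
  induction n; [rewrite harm_0; simpl; lra|].
  assert (/ INR (S n) <= 1).
  { rewrite <- Rinv_1. apply Rinv_le_contravar; [lra|]. apply (le_INR 1); lia. }
  rewrite harm_S. pose proof (S_INR n). lra.
Qed.

Lemma weight_bound k e l : (1 <= k)%nat -> is_sign e -> (1 <= l)%nat -> Rabs (weight k e l) <= 2 / INR l.
Proof.
  intros Hk He Hl. unfold weight.
  assert (H1 : 0 < INR l) by (apply lt_0_INR; lia).
  assert (H2 : INR l <= INR l ^ k).
  { destruct k as [|k]; [lia|]. simpl. rewrite <- (Rmult_1_r (INR l)) at 1.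
    apply Rmult_le_compat_l; [lra|]. apply pow_R1_Rle. apply (le_INR 1); lia. }
  assert (Hn : Rabs (1 + e * (-1) ^ l) <= 2).
  { destruct He as [-> | ->]; destruct (is_sign_m1_pow l) as [E|E]; rewrite E;
      unfold Rabs; destruct Rcase_abs; lra. }
  unfold Rdiv. rewrite Rabs_mult, Rabs_inv, (Rabs_right (INR l ^ k)) by lra.
  apply Rmult_le_compat; auto using Rabs_pos.
  - left; apply Rinv_0_lt_compat; lra.
  - apply Rinv_le_contravar; lra.
Qed.

Lemma weighted_sum_bound k e F n B :
  (1 <= k)%nat -> is_sign e -> 0 <= B -> (forall l, (1 <= l <= n)%nat -> Rabs (F l) <= B) ->
  Rabs (sumR (fun l => weight k e l * F l) n) <= 2 * harm n * B.
Proof.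
  intros Hk He HB HF.
  eapply Rle_trans; [apply sumR_abs|].
  eapply Rle_trans with (sumR (fun l => (2 * B) * / INR l) n).
  - apply sumR_le. intros l Hl. rewrite Rabs_mult.
    replace (2 * B * / INR l) with (2 / INR l * B) by (unfold Rdiv; ring).
    apply Rmult_le_compat; [apply Rabs_pos | apply Rabs_pos | apply weight_bound; auto; lia | apply HF; lia].
  - rewrite sumR_scal_l. unfold harm.
    assert (0 <= sumR (fun i => / INR i) n).
    { rewrite <- (sumR_zero n). apply sumR_le. intros i Hi.
      left; apply Rinv_0_lt_compat, lt_0_INR; lia. }
    nra.
Qed.

Lemma Mn_bound ks es n : List.Forall (fun k => (1 <= k)%nat) ks -> List.Forall is_sign es ->
  Rabs (Mn n ks es) <= (2 * harm n) ^ length ks.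
Proof.
  revert es n; induction ks as [|k ks IH]; intros es n Hk He.
  - rewrite Mn_nil, Rabs_R1 by auto. simpl; lra.
  - assert (H1 := harm_ge1 n).
    destruct es as [|e es].
    + rewrite Mn_nil, Rabs_R1 by auto. apply pow_R1_Rle. lra.
    + apply Forall_cons_iff in Hk as [Hk Hks]. apply Forall_cons_iff in He as [He Hes].
      rewrite Mn_cons. simpl length. simpl pow.
      apply weighted_sum_bound; auto. { apply pow_le; lra. }
      intros l Hl. eapply Rle_trans; [apply IH; auto|].
      apply pow_incr. pose proof (harm_ge1 (l - 1)).
      split; [lra|]. apply Rmult_le_compat_l; [lra | apply harm_mono; lia].
Qed.

Lemma Mstar_bound ks es n : List.Forall (fun k => (1 <= k)%nat) ks -> List.Forall is_sign es ->
  Rabs (Mstar n ks es) <= (2 * harm n) ^ length ks.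
Proof.
  revert es n; induction ks as [|k ks IH]; intros es n Hk He.
  - rewrite Mstar_nil, Rabs_R1 by auto. simpl; lra.
  - assert (H1 := harm_ge1 n).
    destruct es as [|e es].
    + rewrite Mstar_nil, Rabs_R1 by auto. apply pow_R1_Rle. lra.
    + apply Forall_cons_iff in Hk as [Hk Hks]. apply Forall_cons_iff in He as [He Hes].
      rewrite Mstar_cons. simpl length. simpl pow.
      apply weighted_sum_bound; auto. { apply pow_le; lra. }
      intros l Hl. eapply Rle_trans; [apply IH; auto|].
      apply pow_incr. pose proof (harm_ge1 l).
      split; [lra|]. apply Rmult_le_compat_l; [lra | apply harm_mono; lia].
Qed.

(** * Summability of [harm n ^ K / n^2] *)

(* Abel summation against the telescoping weights [1/(n(n+1)) = 1/n - 1/(n+1)]. *)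
Lemma abel_summation (u : nat -> R) N :
  sumR (fun n => u n / (INR n * (INR n + 1))) N + u N / (INR N + 1)
  = u 0%nat + sumR (fun n => (u n - u (n - 1)%nat) / INR n) N.
Proof.
  induction N; [simpl; field|].
  cbn [sumR]. rewrite Nat.sub_succ, Nat.sub_0_r.
  assert (H0 : 0 <= INR N) by apply pos_INR.
  rewrite S_INR.
  transitivity (sumR (fun n => u n / (INR n * (INR n + 1))) N + u N / (INR N + 1)
     + (u (S N) / ((INR N + 1) * (INR N + 1 + 1)) + u (S N) / (INR N + 1 + 1) - u N / (INR N + 1))).
  { ring. }
  rewrite IHN. field. lra.
Qed.

Lemma pow_sub_le a b K : 0 <= b <= a -> a ^ S K - b ^ S K <= INR (S K) * a ^ K * (a - b).
Proof.
  intros Hab. induction K; [simpl; lra|].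
  assert (b ^ S K <= a ^ S K) by (apply pow_incr; lra).
  assert (0 <= a ^ K) by (apply pow_le; lra).
  rewrite S_INR.
  replace (a ^ S (S K) - b ^ S (S K)) with (a * (a ^ S K - b ^ S K) + b ^ S K * (a - b)) by (simpl; ring).
  replace ((INR (S K) + 1) * a ^ S K * (a - b))
    with (a * (INR (S K) * a ^ K * (a - b)) + a ^ S K * (a - b)) by (simpl; ring).
  apply Rplus_le_compat; [apply Rmult_le_compat_l | apply Rmult_le_compat_r]; lra.
Qed.

(* The increments in the Abel summation of [harm n ^ (K+1)] are controlled by
   the terms of exponent [K]. *)
Lemma harm_pow_increment K n :
  (harm (S n) ^ S K - harm n ^ S K) / INR (S n)
  <= 2 * INR (S K) * (harm (S n) ^ K / (INR (S n) * (INR (S n) + 1))).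
Proof.
  set (t := INR (S n)).
  assert (Ht : 1 <= t) by (apply (le_INR 1); lia).
  assert (0 < / t) by (apply Rinv_0_lt_compat; lra).
  pose proof (harm_S n) as HS. fold t in HS. pose proof (harm_ge1 n).
  pose proof (pow_sub_le (harm (S n)) (harm n) K ltac:(lra)) as PD.
  rewrite HS in PD at 3. replace (harm n + / t - harm n) with (/ t) in PD by ring.
  assert (0 <= harm (S n) ^ K) by (apply pow_le; lra).
  assert (0 <= INR (S K)) by apply pos_INR.
  unfold Rdiv. apply Rle_trans with (INR (S K) * harm (S n) ^ K * / t * / t).
  { apply Rmult_le_compat_r; lra. }
  replace (2 * INR (S K) * (harm (S n) ^ K * / (t * (t + 1))))
    with (INR (S K) * harm (S n) ^ K * (2 / (t * (t + 1)))) by (field; lra).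
  rewrite Rmult_assoc. apply Rmult_le_compat_l; [apply Rmult_le_pos; auto|].
  replace (/ t * / t) with ((t + 1) * / (t * t * (t + 1))) by (field; lra).
  replace (2 / (t * (t + 1))) with ((2 * t) * / (t * t * (t + 1))) by (field; lra).
  apply Rmult_le_compat_r; [left; apply Rinv_0_lt_compat; nra | lra].
Qed.

Lemma harm_series_bounded K :
  exists B, forall N, sumR (fun n => harm n ^ K / (INR n * (INR n + 1))) N <= B.
Proof.
  induction K as [|K [B HB]].
  - exists 1. intros N. pose proof (abel_summation (fun _ => 1) N) as E. simpl in E.
    rewrite (sumR_vanish (fun n => (1 - 1) / INR n)) in E by (intros; unfold Rdiv; ring).
    assert (0 <= 1 / (INR N + 1)) by (pose proof (pos_INR N); apply Rdiv_le_0_compat; lra).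
    simpl pow. lra.
  - exists (1 + 2 * INR (S K) * B). intros N.
    pose proof (abel_summation (fun n => harm n ^ S K) N) as E. cbv beta in E.
    rewrite harm_0, pow1 in E.
    assert (0 <= harm N ^ S K / (INR N + 1)).
    { pose proof (pos_INR N). pose proof (harm_ge1 N). apply Rdiv_le_0_compat; [apply pow_le|]; lra. }
    assert (sumR (fun n => (harm n ^ S K - harm (n - 1)%nat ^ S K) / INR n) N
            <= 2 * INR (S K) * sumR (fun n => harm n ^ K / (INR n * (INR n + 1))) N).
    { rewrite <- sumR_scal_l. apply sumR_le. intros [|n] Hn; [lia|].
      rewrite Nat.sub_succ, Nat.sub_0_r. apply harm_pow_increment. }
    assert (0 <= INR (S K)) by apply pos_INR.
    specialize (HB N).
    assert (INR (S K) * sumR (fun n => harm n ^ K / (INR n * (INR n + 1))) N <= INR (S K) * B)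
      by (apply Rmult_le_compat_l; auto).
    lra.
Qed.

(** * Convergence of the truncations *)

Lemma ex_series_bounded (b : nat -> R) B :
  (forall i, 0 <= b i) -> (forall N, sum_n b N <= B) -> ex_series b.
Proof.
  intros H0 HB. destruct (ex_finite_lim_seq_incr (sum_n b) B) as [l Hl]; auto.
  - intros n. rewrite sum_Sn. unfold plus; simpl. specialize (H0 (S n)). lra.
  - exists l. exact Hl.
Qed.

Lemma is_lim_seq_pow_1 (v : nat -> R) K : is_lim_seq v 0 -> is_lim_seq (fun i => (1 + v i) ^ K) 1.
Proof.
  intros Hv. induction K; simpl; [apply is_lim_seq_const|].
  assert (H := is_lim_seq_mult' _ _ _ _ (is_lim_seq_plus' _ _ _ _ (is_lim_seq_const 1) Hv) IHK).
  replace ((1 + 0) * 1) with 1 in H by ring. exact H.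
Qed.

(* Polynomial times geometric series converge (ratio test). *)
Lemma ex_series_polygeom K r : 0 < r < 1 -> ex_series (fun i => (INR i + 1) ^ K * r ^ i).
Proof.
  intros Hr.
  assert (Hpos : forall i, 0 < (INR i + 1) ^ K * r ^ i).
  { intros i. apply Rmult_lt_0_compat; apply pow_lt; [pose proof (pos_INR i); lra | lra]. }
  apply (ex_series_ext (fun i => Rabs ((INR i + 1) ^ K * r ^ i))).
  { intros i. apply Rabs_right. apply Rle_ge; left; apply Hpos. }
  apply (ex_series_DAlembert _ r); [lra | intros i; specialize (Hpos i); lra |].
  assert (Hv : is_lim_seq (fun i => / INR (S i)) 0).
  { replace (Finite 0) with (Rbar_inv p_infty) by reflexivity.
    apply is_lim_seq_inv; [| discriminate].
    apply (is_lim_seq_incr_1 INR). apply is_lim_seq_INR. }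
  apply (is_lim_seq_ext (fun i => (1 + / INR (S i)) ^ K * r)).
  { intros i. assert (H1 : 0 < INR (S i)) by (apply lt_0_INR; lia).
    assert (E : INR (S i) + 1 = (INR i + 1) * (1 + / INR (S i))) by (rewrite S_INR in *; field; lra).
    assert (Q : (INR (S i) + 1) ^ K * r ^ S i / ((INR i + 1) ^ K * r ^ i) = (1 + / INR (S i)) ^ K * r).
    { rewrite E, Rpow_mult_distr. simpl (r ^ S i). field.
      split; apply Rgt_not_eq, pow_lt; [lra | pose proof (pos_INR i); lra]. }
    rewrite Q. symmetry. apply Rabs_right. apply Rle_ge. apply Rmult_le_pos; [|lra]. apply pow_le.
    assert (0 < / INR (S i)) by (apply Rinv_0_lt_compat; lra). lra. }
  replace (Finite r) with (Rbar_mult 1 r) by (simpl; f_equal; ring).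
  apply is_lim_seq_scal_r. apply is_lim_seq_pow_1; auto.
Qed.

Lemma series_partial_sums (f : nat -> R) :
  ex_series (fun i => f (S i)) -> is_lim_seq (fun N => sumR f (S N)) (Series (fun i => f (S i))).
Proof.
  intros H. apply (is_lim_seq_ext (sum_n (fun i => f (S i)))); [intros; apply sum_n_sumR|].
  exact (Series_correct _ H).
Qed.

Lemma Mi_term_bound k e ks es x i :
  (1 <= k)%nat -> is_sign e -> List.Forall (fun k => (1 <= k)%nat) ks -> List.Forall is_sign es ->
  Rabs x < 1 ->
  Rabs (x ^ S i * weight k e (S i) * Mn i ks es)
  <= (2 * 2 ^ length ks) * ((INR i + 1) ^ length ks * ((1 + Rabs x) / 2) ^ i).
Proof.
  intros Hk He Hks Hes Hx.
  set (K := length ks). set (r := (1 + Rabs x) / 2).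
  rewrite !Rabs_mult.
  assert (A1 : Rabs (x ^ S i) <= r ^ i).
  { rewrite <- RPow_abs. simpl. apply Rle_trans with (Rabs x ^ i).
    - rewrite <- (Rmult_1_l (Rabs x ^ i)) at 2. apply Rmult_le_compat_r; [apply pow_le, Rabs_pos | lra].
    - apply pow_incr. split; [apply Rabs_pos | unfold r; lra]. }
  assert (A2 : Rabs (weight k e (S i)) <= 2).
  { eapply Rle_trans; [apply weight_bound; auto; lia|].
    assert (1 <= INR (S i)) by (apply (le_INR 1); lia).
    unfold Rdiv. rewrite <- (Rmult_1_r 2) at 2. apply Rmult_le_compat_l; [lra|].
    rewrite <- Rinv_1. apply Rinv_le_contravar; lra. }
  assert (A3 : Rabs (Mn i ks es) <= 2 ^ K * (INR i + 1) ^ K).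
  { eapply Rle_trans; [apply Mn_bound; auto|]. rewrite <- Rpow_mult_distr.
    apply pow_incr. pose proof (harm_ge1 i). pose proof (harm_le i). lra. }
  replace (2 * 2 ^ K * ((INR i + 1) ^ K * r ^ i)) with (r ^ i * 2 * (2 ^ K * (INR i + 1) ^ K)) by ring.
  apply Rmult_le_compat; auto using Rabs_pos.
  - apply Rmult_le_pos; apply Rabs_pos.
  - apply Rmult_le_compat; auto using Rabs_pos.
Qed.

Lemma Mi_trunc_cvg ks es x : ks <> [] -> es <> [] ->
  List.Forall (fun k => (1 <= k)%nat) ks -> List.Forall is_sign es -> Rabs x < 1 ->
  is_lim_seq (fun N => Mi_trunc (S N) ks es (fun l => x ^ l)) (Mi ks es x).
Proof.
  intros Hk0 He0 Hk He Hx.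
  destruct ks as [|k ks]; [congruence|]. destruct es as [|e es]; [congruence|].
  apply Forall_cons_iff in Hk as [Hk Hks]. apply Forall_cons_iff in He as [He Hes].
  set (t := fun l => x ^ l * weight k e l * Mn (l - 1) ks es).
  replace (Mi (k :: ks) (e :: es) x) with (Series (fun i => t (S i)))
    by (apply Series_ext; intros i; unfold t, weight, Rdiv; simpl; ring).
  apply series_partial_sums.
  set (K := length ks). set (r := (1 + Rabs x) / 2).
  apply (@ex_series_le R_AbsRing R_CompleteNormedModule _
           (fun i => (2 * 2 ^ K) * ((INR i + 1) ^ K * r ^ i))).
  - intros i. change (norm (t (S i))) with (Rabs (t (S i))). unfold t.
    rewrite Nat.sub_succ, Nat.sub_0_r. apply Mi_term_bound; auto.
  - apply (ex_series_ext (fun i => scal (2 * 2 ^ K) ((INR i + 1) ^ K * r ^ i))); [reflexivity|].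
    apply (@ex_series_scal_l R_AbsRing R_NormedModule). apply ex_series_polygeom.
    unfold r; pose proof (Rabs_pos x); lra.
Qed.

Lemma conv_term_bound k1 l1 ks hs ls es h e n :
  (1 <= k1)%nat -> (1 <= l1)%nat -> (1 <= n)%nat ->
  List.Forall (fun k => (1 <= k)%nat) ks -> List.Forall (fun k => (1 <= k)%nat) ls ->
  is_sign h -> is_sign e -> List.Forall is_sign hs -> List.Forall is_sign es ->
  Rabs (Mn (n - 1) ks hs * Mstar n ls es / (INR n) ^ (k1 + l1)
        * ((1 + e * (-1) ^ n) * (1 + h * (-1) ^ n) / 2))
  <= (4 * 2 ^ (length ks + length ls)) * (harm n ^ (length ks + length ls) / (INR n * (INR n + 1))).
Proof.
  intros Hk1 Hl1 Hn Hks Hls Hh He Hhs Hes.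
  set (t := INR n).
  assert (Ht : 1 <= t) by (apply (le_INR 1); lia).
  assert (A1 : Rabs (Mn (n - 1) ks hs) <= (2 * harm n) ^ length ks).
  { eapply Rle_trans; [apply Mn_bound; auto|]. apply pow_incr.
    pose proof (harm_ge1 (n - 1)). pose proof (harm_mono (n - 1) n ltac:(lia)). lra. }
  assert (A2 := Mstar_bound ls es n Hls Hes).
  assert (A3 : Rabs (/ t ^ (k1 + l1)) <= 2 * / (t * (t + 1))).
  { rewrite Rabs_inv, Rabs_right by (apply Rle_ge, pow_le; lra).
    apply Rle_trans with (/ (t * t)).
    - apply Rinv_le_contravar; [nra|]. replace (t * t) with (t ^ 2) by ring. apply Rle_pow; auto; lia.
    - replace (/ (t * t)) with ((t + 1) * / (t * t * (t + 1))) by (field; lra).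
      replace (2 * / (t * (t + 1))) with ((2 * t) * / (t * t * (t + 1))) by (field; lra).
      apply Rmult_le_compat_r; [left; apply Rinv_0_lt_compat; nra | lra]. }
  assert (A4 : Rabs ((1 + e * (-1) ^ n) * (1 + h * (-1) ^ n) / 2) <= 2).
  { unfold Rdiv. rewrite Rabs_mult, Rabs_inv, (Rabs_right 2) by lra.
    destruct He as [-> | ->], Hh as [-> | ->]; destruct (is_sign_m1_pow n) as [E|E]; rewrite E;
      unfold Rabs; destruct Rcase_abs; lra. }
  unfold Rdiv at 1. rewrite !Rabs_mult.
  apply Rle_trans with ((2 * harm n) ^ length ks * (2 * harm n) ^ length ls * (2 * / (t * (t + 1))) * 2).
  - repeat apply Rmult_le_compat; auto using Rabs_pos; repeat apply Rmult_le_pos; apply Rabs_pos.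
  - rewrite <- pow_add, Rpow_mult_distr. unfold Rdiv. apply Req_le. ring.
Qed.

Lemma conv_trunc_cvg k1 ks hs ls es :
  (1 <= k1)%nat -> List.Forall (fun k => (1 <= k)%nat) ks -> List.Forall (fun k => (1 <= k)%nat) ls ->
  List.Forall is_sign hs -> List.Forall is_sign es ->
  is_lim_seq (fun N => conv_trunc (k1 :: ks) hs ls es (S N)) (conv (k1 :: ks) hs ls es).
Proof.
  intros Hk1 Hks Hls Hhs Hes.
  destruct hs as [|h hs]; [apply is_lim_seq_const|].
  destruct ls as [|l1 ls]; [apply is_lim_seq_const|].
  destruct es as [|e es]; [apply is_lim_seq_const|].
  apply Forall_cons_iff in Hls as [Hl1 Hls]. apply Forall_cons_iff in Hhs as [Hh Hhs].
  apply Forall_cons_iff in Hes as [He Hes].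
  apply (series_partial_sums (fun n => Mn (n - 1) ks hs * Mstar n ls es / (INR n) ^ (k1 + l1)
        * ((1 + e * (-1) ^ n) * (1 + h * (-1) ^ n) / 2))).
  set (K := (length ks + length ls)%nat).
  destruct (harm_series_bounded K) as [B HB].
  set (b := fun n => (4 * 2 ^ K) * (harm n ^ K / (INR n * (INR n + 1)))).
  apply (@ex_series_le R_AbsRing R_CompleteNormedModule _ (fun i => b (S i))).
  - intros i. apply conv_term_bound; auto; lia.
  - apply (ex_series_bounded _ (4 * 2 ^ K * B)).
    + intros i. unfold b. pose proof (harm_ge1 (S i)). assert (0 < INR (S i)) by (apply lt_0_INR; lia).
      apply Rmult_le_pos; [apply Rmult_le_pos; [lra | apply pow_le; lra]|].
      apply Rdiv_le_0_compat; [apply pow_le; lra | nra].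
    + intros N. rewrite (sum_n_sumR b N). unfold b. rewrite sumR_scal_l.
      apply Rmult_le_compat_l; [apply Rmult_le_pos; [lra | apply pow_le; lra] | apply HB].
Qed.

Lemma Mi_cut_cvg (m : list nat) (eps : list R) x s j :
  List.Forall (fun k => (1 <= k)%nat) m -> List.Forall is_sign eps -> is_sign s -> Rabs x < 1 ->
  (1 <= j <= length m)%nat ->
  is_lim_seq (fun N => Mi_trunc (S N) (rev (skipn (j - 1) m)) (scale s (qvec (skipn j eps)) ++ [s])
                         (fun l => x ^ l))
             (Mi (rev (skipn (j - 1) m)) (scale s (qvec (skipn j eps)) ++ [s]) x).
Proof.
  intros Hm Heps Hs Hx Hj.
  apply Mi_trunc_cvg; auto.
  - intros E. apply (f_equal (@length nat)) in E.
    rewrite length_rev, length_skipn in E. simpl in E. lia.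
  - destruct (scale _ _); discriminate.
  - apply Forall_rev, Forall_skipn; auto.
  - apply Forall_app; split; [apply is_sign_scale, is_sign_qvec, Forall_skipn | constructor]; auto.
Qed.

Lemma conv_cut_cvg k1 ks hs (m : list nat) (eps : list R) s j :
  (1 <= k1)%nat -> List.Forall (fun k => (1 <= k)%nat) ks -> List.Forall (fun k => (1 <= k)%nat) m ->
  List.Forall is_sign hs -> List.Forall is_sign eps -> is_sign s ->
  is_lim_seq (fun N => conv_trunc (k1 :: ks) hs (1%nat :: firstn (j - 1) m)
                         (scale s (pvec (firstn j eps))) (S N))
             (conv (k1 :: ks) hs (1%nat :: firstn (j - 1) m) (scale s (pvec (firstn j eps)))).
Proof.
  intros Hk1 Hks Hm Hhs Heps Hs.
  apply conv_trunc_cvg; auto.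
  - constructor; [lia | apply Forall_firstn; auto].
  - apply is_sign_scale, is_sign_pvec, Forall_firstn; auto.
Qed.

(* [is_lim_seq_scal_l] with a real (not extended) limit. *)
Lemma is_lim_seq_scal (u : nat -> R) a (l : R) : is_lim_seq u l -> is_lim_seq (fun n => a * u n) (a * l).
Proof. exact (is_lim_seq_scal_l u a l). Qed.

Lemma is_lim_seq_sumR_prod (w : nat -> R) (a b : nat -> nat -> R) (la lb : nat -> R) p :
  (forall j, (1 <= j <= p)%nat -> is_lim_seq (a j) (la j)) ->
  (forall j, (1 <= j <= p)%nat -> is_lim_seq (b j) (lb j)) ->
  is_lim_seq (fun N => sumR (fun j => w j * a j N * b j N) p) (sumR (fun j => w j * la j * lb j) p).
Proof.
  induction p; intros Ha Hb; simpl; [apply is_lim_seq_const|].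
  apply is_lim_seq_plus'; [apply IHp; intros; [apply Ha | apply Hb]; lia|].
  apply is_lim_seq_mult'; [apply is_lim_seq_scal, Ha | apply Hb]; lia.
Qed.

Lemma identity_limit (P A Q1 Q2 : nat -> R) (lP lQ1 lQ2 c : R) :
  (forall N, P N = c * sumR A (S N) - Q1 N - Q2 N) ->
  c * c = 1 -> is_lim_seq P lP -> is_lim_seq Q1 lQ1 -> is_lim_seq Q2 lQ2 ->
  lP = c * Series (fun i => A (S i)) - lQ1 - lQ2.
Proof.
  intros HN Hc HP HQ1 HQ2.
  assert (HA : is_lim_seq (fun N => sumR A (S N)) (c * (lP + lQ1 + lQ2))).
  { apply (is_lim_seq_ext (fun N => c * (P N + Q1 N + Q2 N))).
    - intros N. rewrite HN. transitivity ((c * c) * sumR A (S N)); [ring | rewrite Hc; ring].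
    - apply is_lim_seq_scal. apply is_lim_seq_plus'; [apply is_lim_seq_plus'|]; auto. }
  assert (HS : Series (fun i => A (S i)) = c * (lP + lQ1 + lQ2)).
  { unfold Series. rewrite (Lim_seq_ext _ (fun N => sumR A (S N))) by apply sum_n_sumR.
    rewrite (is_lim_seq_unique _ _ HA). reflexivity. }
  rewrite HS. transitivity ((c * c) * (lP + lQ1 + lQ2) - lQ1 - lQ2); [rewrite Hc; ring | ring].
Qed.

Theorem mainTheorem10 (k1 : nat) (ks : list nat) (h1 : R) (hs : list R)
  (m : list nat) (eps : list R) (x : R) :
  (1 <= k1)%nat -> List.Forall (fun k => (1 <= k)%nat) ks ->
  List.Forall (fun k => (1 <= k)%nat) m ->
  length hs = length ks -> length eps = length m -> (1 <= length m)%nat ->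
  is_sign h1 -> List.Forall is_sign hs -> List.Forall is_sign eps ->
  Rabs x < 1 ->
  let p := length m in
  let etabar := prodR (h1 :: hs) in
  Mi (rev m ++ (S k1) :: ks) (scale etabar (qvec eps) ++ pvec (h1 :: hs)) x
  = (-1) ^ p * Series (fun i => let n := S i in
        Mn (n - 1) ks (pvec hs) / (INR n) ^ (k1 + 1)
        * (1 + etabar * (-1) ^ n) * Tail n m eps x)
    - sumR (fun j => (-1) ^ j
        * Mi (rev (skipn (j - 1) m)) (scale (-1) (qvec (skipn j eps)) ++ [-1]) x
        * conv (k1 :: ks) (pvec (h1 :: hs)) (1%nat :: firstn (j - 1) m)
               (scale (-1) (pvec (firstn j eps)))) p
    - sumR (fun j => (-1) ^ j
        * Mi (rev (skipn (j - 1) m)) (qvec (skipn j eps) ++ [1]) x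
        * conv (k1 :: ks) (pvec (h1 :: hs)) (1%nat :: firstn (j - 1) m)
               (pvec (firstn j eps))) p.
Proof.
  intros Hk1 Hks Hm _ Hl2 _ Hh1 Hhs Heps Hx p etabar.
  assert (Hsigns : List.Forall is_sign (h1 :: hs)) by (constructor; auto).
  assert (Hetabar : is_sign etabar) by (apply is_sign_prodR; auto).
  assert (Hm1 : is_sign (-1)) by (right; reflexivity).
  assert (Hp1 : is_sign 1) by (left; reflexivity).
  eapply (identity_limit _
          (fun n => Mn (n - 1) ks (pvec hs) / INR n ^ (k1 + 1) * (1 + etabar * (-1) ^ n) * Tail n m eps x)).
  { intros N. apply truncated_identity; auto. }
  - rewrite <- Rpow_mult_distr. replace (-1 * -1) with 1 by ring. apply pow1.
  - apply Mi_trunc_cvg; auto.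
    + destruct (rev m); discriminate.
    + destruct (scale etabar (qvec eps)); discriminate.
    + apply Forall_app; split; [apply Forall_rev | constructor]; auto; lia.
    + apply Forall_app; split; [apply is_sign_scale, is_sign_qvec | apply is_sign_pvec]; auto.
  - apply is_lim_seq_sumR_prod; intros j Hj;
      [apply Mi_cut_cvg | apply conv_cut_cvg]; auto using is_sign_pvec.
  - apply is_lim_seq_sumR_prod; intros j Hj;
      [rewrite <- (scale_1 (qvec _)); apply Mi_cut_cvg
      | rewrite <- (scale_1 (pvec (firstn j eps))); apply conv_cut_cvg]; auto using is_sign_pvec.
Qed.
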